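(* Let $S$ be a fixed finite set with $N$ elements and let $V\to\infty$. For each $V$ let $n^V:S\to\mathbb Z^{N_2}_{\ge0}$ be injective and $\mathbf n^{x,V}\in\mathbb Z^{N_1}_{\ge0}$, and assume: (a) for all $y,y'\in S$ and $\ell$, whether $n^V(y')-n^V(y)=\Xi^Y_\ell$ (resp. $=-\Xi^Y_\ell$) does not depend on $V$ (this defines a fixed set of edges $y\to y'$ labelled $(\ell,+)$ resp. $(\ell,-)$); (b) $n^V(y)/(VN_A)\to\beta(y)\in[0,\infty)^{N_2}$ for each $y\in S$ and $\mathbf n^{x,V}/(VN_A)\to\alpha\in[0,\infty)^{N_1}$; (c) for each $V$ the generator $Q^V=(q^V_{yy'})$ on $S$, defined by $q^V_{yy'}=r_{\pm\ell}(\mathbf n^{x,V},n^V(y);V)$ if $y\to y'$ is an edge labelled $(\ell,\pm)$, $q^V_{yy'}=0$ for other $y'\neq y$, and $q^V_{yy}=-\sum_{y'\ne y}q^V_{yy'}$, is irreducible. Define the limiting generator $\hat Q$ on $S$ by $\hat q_{yy'}=a_{\pm\ell}(\alpha,\beta(y))$ if $y\to y'$ is an edge labelled $(\ell,\pm)$, $\hat q_{yy'}=0$ for other $y'\ne y$, $\hat q_{yy}=-\sum_{y'\ne y}\hat q_{yy'}$, and assume $\sum_{j\in S}|\hat Q(\{j\}^c)|\neq 0$. Then for every $\tilde c\in\mathbb Z^M$ the limit $\mathcal J_{\tilde c}=\lim_{V\to\infty}\omega^V_{\tilde c}/V$ exists and $$ \mathcal J_{\tilde c}=\sum_{\substack{c=[y_1,\dots,y_s]\\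 \phi(c)=\tilde c}}(-1)^{s-1}\,N_A^s\prod_{\ell=1}^Mk_{+\ell}^{c^+_\ell}k_{-\ell}^{c^-_\ell}\prod_{i=1}^{N_1}\alpha_i^{\,c^+_\ell\Xi^{i,X}_{+\ell}+c^-_\ell\Xi^{i,X}_{-\ell}}\prod_{h=1}^s\prod_{j=1}^{N_2}\beta_j(y_h)^{\Xi^{j,Y}_{\sigma_h\ell_h}}\cdot\frac{|\hat Q(\{y_1,\dots,y_s\}^c)|}{\sum_{j\in S}|\hat Q(\{j\}^c)|}, $$ the sum running over all directed cycles $c$ in $S$ (each counted once up to rotation) with $\phi(c)=\tilde c$; here $(\ell_h,\sigma_h)$ is the label of the edge $y_h\to y_{h+1}$ and $c^\pm_\ell$ are as defined in the context. Equivalently, each term is $(-1)^{s-1}\hat q_{y_1y_2}\cdots\hat q_{y_sy_1}\,|\hat Q(\{y_1,\dots,y_s\}^c)|/\sum_{j}|\hat Q(\{j\}^c)|$, which equals $\lim_{V\to\infty}\omega^V_c/V$.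
   Context: Chemical reaction network model. There are external species $X_1,\dots,X_{N_1}$ and internal species $Y_1,\dots,Y_{N_2}$, and $M$ reversible reactions $R_1,\dots,R_M$: $R_1:\ \sum_j \Xi_{+1}^{j,Y}Y_j+\sum_i\Xi_{+1}^{i,X}X_i\rightleftharpoons\sum_j\Xi_{-1}^{j,Y}Y_j$; $R_\ell:\ \sum_j\Xi_{+\ell}^{j,Y}Y_j\rightleftharpoons\sum_j\Xi_{-\ell}^{j,Y}Y_j$ for $2\le\ell\le M-1$; $R_M:\ \sum_j\Xi_{+M}^{j,Y}Y_j\rightleftharpoons\sum_i\Xi_{-M}^{i,X}X_i+\sum_j\Xi_{-M}^{j,Y}Y_j$. All $\Xi^{j,Y}_{\pm\ell},\Xi^{i,X}_{\pm\ell}$ are nonnegative integers, with the convention $\Xi^{i,X}_{\pm\ell}=0$ except for $\Xi^{i,X}_{+1}$ and $\Xi^{i,X}_{-M}$. Here $\Xi^{\cdot}_{+\ell}$ are reactant coefficients of the forward reaction $R_{+\ell}$ and $\Xi^{\cdot}_{-\ell}$ are reactant coefficients of the backward reaction $R_{-\ell}$. Let $n_{\sigma\ell}=\sum_i\Xi_{\sigma\ell}^{i,X}+\sum_j\Xi_{\sigma\ell}^{j,Y}$, $V>0$ the volume, $N_A$ Avogadro's number, and $k_{\pm\ell}>0$ rate constants. Writing $(n)_m=n(n-1)\cdots(n-m+1)$, the propensity of $R_{\sigma\ell}$ is $$r_{\sigma\ell}(\mathbf n^x,\mathbf n^y;V)=k_{\sigma\ell}\,(VN_A)^{1-n_{\sigma\ell}}\prod_{i=1}^{N_1}(n^x_i)_{\Xi^{i,X}_{\sigma\ell}}\prod_{j=1}^{N_2}(n^y_j)_{\Xi^{j,Y}_{\sigma\ell}},$$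 and $a_{\sigma\ell}(\alpha,\beta)=N_Ak_{\sigma\ell}\prod_i\alpha_i^{\Xi^{i,X}_{\sigma\ell}}\prod_j\beta_j^{\Xi^{j,Y}_{\sigma\ell}}$. The stoichiometric column of reaction $\ell$ for $Y$ is $\Xi^Y_\ell\in\mathbb Z^{N_2}$ with entries $\Xi^{j,Y}_{-\ell}-\Xi^{j,Y}_{+\ell}$. Assume the $2M$ vectors $\pm\Xi^Y_1,\dots,\pm\Xi^Y_M$ are nonzero and pairwise distinct, so every transition of the chain corresponds to a unique reaction and direction. Cycles and cycle fluxes. A directed cycle $c=[y_1,\dots,y_s]$, $s\ge2$, consists of distinct states with $q_{y_hy_{h+1}}>0$ for all $h$ ($y_{s+1}=y_1$); rotations $[y_i,\dots,y_{i+s-1}]$ (indices mod $s$) are identified. For a finite irreducible generator $Q$ on $S$ and $H\subseteq S$, $|Q(H)|$ denotes the determinant of the submatrix of $Q$ with rows and columns indexed by $H$ ($|Q(\emptyset)|=1$), and $H^c=S\setminus H$. The cycle flux of $c$ (the almost-sure long-run rate at which the chain's trajectory completes the cycle $c$) is $$\omega_c=(-1)^{s-1}q_{y_1y_2}q_{y_2y_3}\cdots q_{y_sy_1}\frac{|Q(\{y_1,\dots,y_s\}^c)|}{\sum_{j\in S}|Q(\{j\}^c)|}.$$ For a cycle $c$, let $c^+_\ell$ (resp. $c^-_\ell$) be the number of steps $y_h\to y_{h+1}$ that are the forward (resp. backward) reaction $\ell$, i.e. $y_{h+1}=y_h+\Xi^Y_\ell$ (resp. $y_{h+1}=y_h-\Xi^Y_\ell$),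 and $\phi(c)=\tilde c=(c_1,\dots,c_M)$ with $c_\ell=c^+_\ell-c^-_\ell$ (net number of occurrences of reaction $\ell$ in $c$). The mesoscopic reaction-cycle flux of $\tilde c\in\mathbb Z^M$ is $\omega_{\tilde c}=\sum_{c:\ \phi(c)=\tilde c}\omega_c$; $\omega^V_c,\omega^V_{\tilde c}$ denote these quantities computed with the generator $Q^V$. *)

From HB Require Import structures.
From mathcomp Require Import all_boot all_order all_algebra.
From mathcomp Require Import all_classical all_reals topology normedtype.
Set Implicit Arguments.
Unset Strict Implicit.
Unset Printing Implicit Defensive.
Import Order.TTheory GRing.Theory Num.Theory.
Local Open Scope ring_scope.

(* Conventions.
   - reactions are indexed by 'I_M; a direction is a bool:
     true = forward reaction R_{+l}, false = backward reaction R_{-l}.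
   - XiY s l j = Xi^{j,Y}_{s l}, XiX s l i = Xi^{i,X}_{s l} (reactant coefficients).
   - a generator on the finite state space S is a function S -> S -> R. *)

Section Defs.
Variables (R : realType) (N1 N2 M : nat).

Definition stoich (XiY : bool -> 'I_M -> 'I_N2 -> nat) (l : 'I_M) (j : 'I_N2) : int :=
  (XiY false l j)%:Z - (XiY true l j)%:Z.

Definition sstoich (XiY : bool -> 'I_M -> 'I_N2 -> nat) (s : bool) (l : 'I_M) (j : 'I_N2) : int :=
  if s then stoich XiY l j else - stoich XiY l j.

Definition nsig (XiX : bool -> 'I_M -> 'I_N1 -> nat) (XiY : bool -> 'I_M -> 'I_N2 -> nat)
  (s : bool) (l : 'I_M) : nat :=
  (\sum_(i < N1) XiX s l i + \sum_(j < N2) XiY s l j)%N.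

Definition propensity (k : bool -> 'I_M -> R) (NA : R)
  (XiX : bool -> 'I_M -> 'I_N1 -> nat) (XiY : bool -> 'I_M -> 'I_N2 -> nat)
  (V : R) (nx : 'I_N1 -> nat) (ny : 'I_N2 -> nat) (s : bool) (l : 'I_M) : R :=
  k s l * (V * NA) ^ (1 - (nsig XiX XiY s l)%:Z)
  * \prod_(i < N1) ((nx i) ^_ (XiX s l i))%:R
  * \prod_(j < N2) ((ny j) ^_ (XiY s l j))%:R.

Definition arate (k : bool -> 'I_M -> R) (NA : R)
  (XiX : bool -> 'I_M -> 'I_N1 -> nat) (XiY : bool -> 'I_M -> 'I_N2 -> nat)
  (alpha : 'I_N1 -> R) (beta : 'I_N2 -> R) (s : bool) (l : 'I_M) : R :=
  NA * k s l * \prod_(i < N1) alpha i ^+ XiX s l i * \prod_(j < N2) beta j ^+ XiY s l j.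

Variable S : finType.

Definition labV (XiY : bool -> 'I_M -> 'I_N2 -> nat) (n : S -> 'I_N2 -> nat)
  (y y' : S) (l : 'I_M) (s : bool) : bool :=
  [forall j, (n y' j)%:Z - (n y j)%:Z == sstoich XiY s l j].

(* generator built from a labelling and rates attached to labels:
   q_{yy'} = rate y l s if y -> y' is labelled (l,s), 0 otherwise (y' <> y),
   q_{yy} = - sum_{y' <> y} q_{yy'}.  (Labels are unique under the standing
   assumption that the vectors +-Xi^Y_l are nonzero and pairwise distinct.) *)
Definition offdiag (lab : S -> S -> 'I_M -> bool -> bool) (rate : S -> bool -> 'I_M -> R)
  (y y' : S) : R :=
  \sum_(l < M) \sum_(s : bool) (if lab y y' l s then rate y s l else 0).

Definition mkGen (lab : S -> S -> 'I_M -> bool -> bool) (rate : S -> bool -> 'I_M -> R)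
  (y y' : S) : R :=
  if y == y' then - \sum_(z | z != y) offdiag lab rate y z else offdiag lab rate y y'.

Definition irreducible_gen (Q : S -> S -> R) : Prop :=
  forall y y', connect [rel a b | (a != b) && (0 < Q a b)] y y'.

Definition minorQ (Q : S -> S -> R) (H : {set S}) : R :=
  \det (\matrix_(i < #|H|, j < #|H|) Q (enum_val i) (enum_val j)).

Definition is_dcycle (P : rel S) (c : seq S) : bool :=
  [&& (2 <= size c)%N, uniq c & cycle P c].

(* canonical representative of a rotation class: first state has minimal rank *)
Definition canon_rot (c : seq S) : bool :=
  if c is y :: _ then all (fun z => (enum_rank y <= enum_rank z)%N) c else false.

Definition posrel (Q : S -> S -> R) : rel S := fun a b => 0 < Q a b.

Definition omega (Q : S -> S -> R) (c : seq S) : R :=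
  (-1) ^+ (size c).-1 * \prod_(y <- c) Q y (next c y)
  * minorQ Q (~: [set y in c]) / \sum_(j : S) minorQ Q (~: [set j]).

Definition phi (lab : S -> S -> 'I_M -> bool -> bool) (c : seq S) (l : 'I_M) : int :=
  (\sum_(y <- c) (lab y (next c y) l true : nat))%:Z
  - (\sum_(y <- c) (lab y (next c y) l false : nat))%:Z.

Definition omega_tilde (Q : S -> S -> R) (lab : S -> S -> 'I_M -> bool -> bool)
  (ct : 'I_M -> int) : R :=
  \sum_(s < #|S|.+1) \sum_(t : s.-tuple S |
      [&& is_dcycle (posrel Q) t, canon_rot t & [forall l, phi lab t l == ct l]])
    omega Q t.

End Defs.

From HB Require Import structures.
From mathcomp Require Import all_boot all_order all_algebra.
From mathcomp Require Import all_classical all_reals topology normedtype.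
From mathcomp Require Import ring.
Import Order.TTheory GRing.Theory Num.Theory numFieldNormedType.Exports.
Local Open Scope classical_set_scope.
Local Open Scope ring_scope.

(* The cycle flux is homogeneous of degree one in the generator: the cycle product has s factors,
   the minor |Q({y_1..y_s}^c)| has degree |S| - s and the normaliser degree |S| - 1.  Hence
   omega^V_c / V is the flux of Q^V / V, which converges entrywise to Qhat because each propensity
   is a product of falling factorials of counts of order V N_A; the flux is continuous in the
   entries wherever the normaliser does not vanish.  Finally, both for Q^V and for Qhat the cycles
   of positive rates may be replaced by the cycles of the fixed edge graph, since an edge cycle
   carrying a vanishing rate has zero flux. *)

Section homogeneity.
Context {R : realType} {S : finType}.

Lemma minorQ_scale (Q : S -> S -> R) (a : R) (H : {set S}) :
  minorQ (fun y z => a * Q y z) H = a ^+ #|H| * minorQ Q H.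
Proof. by rewrite /minorQ -detZ; congr (\det _); apply/matrixP => i j; rewrite !mxE. Qed.

Lemma omega_scale (Q : S -> S -> R) (a : R) (c : seq S) :
  uniq c -> c != [::] -> a != 0 ->
  omega (fun y z => a * Q y z) c = a * omega Q c.
Proof.
move=> uc cn0 a0.
have cardC : #|~: [set y in c]| = (#|S| - size c)%N.
  by have := cardsC [set y in c]; rewrite cardsE (card_uniqP uc) => <-; rewrite addKn.
rewrite /omega big_split /= big_const_seq count_predT iter_mulr_1.
rewrite (minorQ_scale Q a (~: [set y in c])) cardC.
rewrite [X in _ / X](eq_bigr (fun j => a ^+ #|S|.-1 * minorQ Q (~: [set j]))); last first.
  by move=> j _; rewrite minorQ_scale cardsC1.
rewrite -big_distrr /=.
set w := (-1) ^+ _ * _ * minorQ Q _ / _.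
have powE : a ^+ size c * a ^+ (#|S| - size c) = a * a ^+ #|S|.-1.
  have s_gt0 : (0 < size c)%N by rewrite lt0n size_eq0.
  have s_le : (size c <= #|S|)%N by rewrite -(card_uniqP uc) max_card.
  by rewrite -exprD subnKC // -exprS prednK // (leq_trans s_gt0).
transitivity (a ^+ size c * a ^+ (#|S| - size c) / a ^+ #|S|.-1 * w).
  by rewrite /w invfM; ring.
by rewrite powE mulfK // expf_neq0.
Qed.

End homogeneity.

Section continuity.
Context {R : realType} {T : Type} (F : set_system T) {FF : Filter F}.

Lemma cvgr_sum (I : Type) (r : seq I) (P : pred I) (f : I -> T -> R) (a : I -> R) :
  (forall i, P i -> f i x @[x --> F] --> a i) ->
  \sum_(i <- r | P i) f i x @[x --> F] --> \sum_(i <- r | P i) a i.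
Proof. by move=> fa; apply: cvg_big => //; exact: add_continuous. Qed.

Lemma cvgr_prod (I : Type) (r : seq I) (P : pred I) (f : I -> T -> R) (a : I -> R) :
  (forall i, P i -> f i x @[x --> F] --> a i) ->
  \prod_(i <- r | P i) f i x @[x --> F] --> \prod_(i <- r | P i) a i.
Proof. by move=> fa; apply: cvg_big => //; exact: mul_continuous. Qed.

Lemma cvg_det n (A : T -> 'M[R]_n) (B : 'M[R]_n) :
  (forall i j, A x i j @[x --> F] --> B i j) -> \det (A x) @[x --> F] --> \det B.
Proof.
move=> AB; apply: cvgr_sum => s _; apply: cvgM; first exact: cvg_cst.
by apply: cvgr_prod => i _; exact: AB.
Qed.

Lemma cvg_minorQ (S : finType) (Q : T -> S -> S -> R) (Q0 : S -> S -> R)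
    (H : {set S}) :
  (forall y z, Q x y z @[x --> F] --> Q0 y z) ->
  minorQ (Q x) H @[x --> F] --> minorQ Q0 H.
Proof.
move=> QQ0; apply: cvg_det => i j.
by rewrite mxE; under eq_cvg do rewrite mxE; exact: QQ0.
Qed.

Lemma cvg_omega (S : finType) (Q : T -> S -> S -> R) (Q0 : S -> S -> R)
    (c : seq S) :
  (forall y z, Q x y z @[x --> F] --> Q0 y z) ->
  \sum_(j : S) minorQ Q0 (~: [set j]) != 0 ->
  omega (Q x) c @[x --> F] --> omega Q0 c.
Proof.
move=> QQ0 D0; apply: cvgM; last first.
  by apply: cvgV => //; apply: cvgr_sum => j _; exact: cvg_minorQ.
apply: cvgM; last exact: cvg_minorQ.
apply: cvgM; first exact: cvg_cst.
by apply: cvgr_prod => y _; exact: QQ0.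
Qed.

Lemma cvg_near_eq (f g : T -> R) (l : R) :
  (\forall x \near F, f x = g x) -> g @ F --> l -> f @ F --> l.
Proof. by move=> fg; apply: cvg_trans; apply: near_eq_cvg; apply: filterS fg. Qed.

End continuity.

Section falling_factorial.
Context {R : realType}.

Lemma natr_ffact (n m : nat) : ((n ^_ m)%:R : R) = \prod_(i < m) (n%:R - i%:R).
Proof.
elim: m => [|m IH]; first by rewrite ffactn0 big_ord0.
rewrite ffactnSr natrM big_ord_recr /= -IH.
by case: (leqP m n) => [mn|nm]; [rewrite natrB | rewrite ffact_small // !mul0r].
Qed.

Lemma cvg_invr_pinfty : (fun V : R => V^-1) @ +oo --> 0.
Proof.
have := @gtr0_cvgV0 R R _ _ id; rewrite /= => ->; first exact: cvg_id.
exact: nbhs_pinfty_gt.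
Qed.

Lemma cvg_ffact_div (u : R -> nat) (X : R -> R) (b : R) (m : nat) :
  (fun V => (u V)%:R / X V) @ +oo --> b -> (fun V => (X V)^-1) @ +oo --> 0 ->
  (fun V => ((u V) ^_ m)%:R / X V ^+ m) @ +oo --> b ^+ m.
Proof.
move=> ub X0.
have powE (x : R) : x ^+ m = \prod_(i < m) x by rewrite prodr_const card_ord.
have ffactE V :
    ((u V) ^_ m)%:R / X V ^+ m = \prod_(i < m) ((u V)%:R / X V - i%:R * (X V)^-1).
  rewrite natr_ffact powE -prodf_div.
  by apply: eq_bigr => i _; rewrite mulrBl.
under eq_cvg do rewrite ffactE.
have -> : b ^+ m = \prod_(i < m) (b - i%:R * 0).
  by rewrite powE; apply: eq_bigr => i _; rewrite mulr0 subr0.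
by apply: cvgr_prod => i _; apply: cvgB => //; apply: cvgM => //; exact: cvg_cst.
Qed.

End falling_factorial.

Section rates.
Context {R : realType} {N1 N2 M : nat}.
Variables (k : bool -> 'I_M -> R) (NA : R).
Variables (XiX : bool -> 'I_M -> 'I_N1 -> nat) (XiY : bool -> 'I_M -> 'I_N2 -> nat).
Hypotheses (k_gt0 : forall s l, 0 < k s l) (NA_gt0 : 0 < NA).

Lemma propensity_ge0 (V : R) (nx : 'I_N1 -> nat) (ny : 'I_N2 -> nat) s l :
  0 < V -> 0 <= propensity k NA XiX XiY V nx ny s l.
Proof.
by move=> V_gt0; rewrite /propensity !mulr_ge0 ?prodr_ge0 ?ltW ?k_gt0 ?exprz_gt0 ?mulr_gt0.
Qed.

Lemma arate_ge0 (alpha : 'I_N1 -> R) (beta : 'I_N2 -> R) s l :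
  (forall i, 0 <= alpha i) -> (forall j, 0 <= beta j) -> 0 <= arate k NA XiX XiY alpha beta s l.
Proof.
by move=> a0 b0; rewrite /arate !mulr_ge0 ?prodr_ge0 ?ltW ?k_gt0 // => *; exact: exprn_ge0.
Qed.

Lemma cvg_propensity_div (nx : R -> 'I_N1 -> nat) (ny : R -> 'I_N2 -> nat)
    (alpha : 'I_N1 -> R) (beta : 'I_N2 -> R) s l :
  (forall j, (fun V : R => (ny V j)%:R / (V * NA)) @ +oo --> beta j) ->
  (forall i, (fun V : R => (nx V i)%:R / (V * NA)) @ +oo --> alpha i) ->
  (fun V : R => V^-1 * propensity k NA XiX XiY V (nx V) (ny V) s l) @ +oo -->
     arate k NA XiX XiY alpha beta s l.
Proof.
move=> ny_cvg nx_cvg.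
have VNA_cvg : (fun V : R => (V * NA)^-1) @ +oo --> 0.
  rewrite -(mul0r NA^-1); under eq_cvg do rewrite invfM.
  by apply: cvgM; [exact: cvg_invr_pinfty | exact: cvg_cst].
apply: (@cvg_near_eq _ _ _ _ _ (fun V => NA * k s l
    * \prod_(i < N1) (((nx V i) ^_ (XiX s l i))%:R / (V * NA) ^+ (XiX s l i))
    * \prod_(j < N2) (((ny V j) ^_ (XiY s l j))%:R / (V * NA) ^+ (XiY s l j)))).
  near=> V.
  have V_neq0 : V != 0 by apply: lt0r_neq0; near: V; exact: nbhs_pinfty_gt.
  have VNA_neq0 : V * NA != 0 by rewrite mulf_neq0 // lt0r_neq0.
  rewrite /propensity /nsig expfzDr // expr1z -exprnN exprD -!prodrXr !prodf_div.
  field.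
  by rewrite V_neq0 andbT; apply/andP; split; apply/prodf_neq0 => i _; exact: expf_neq0.
apply: cvgM; last by apply: cvgr_prod => j _; exact: cvg_ffact_div.
apply: cvgM; last by apply: cvgr_prod => i _; exact: cvg_ffact_div.
exact: cvg_cst.
Unshelve. all: by end_near.
Qed.

Lemma labV_irrefl (S : finType) (n : S -> 'I_N2 -> nat) y l s :
  (exists j, sstoich XiY s l j != 0) -> ~~ labV XiY n y y l s.
Proof.
move=> [j Xi_neq0]; apply/forallP => /(_ j).
by rewrite subrr eq_sym (negbTE Xi_neq0).
Qed.

End rates.

Section generators.
Context {R : realType} {M : nat} {S : finType}.
Variables (lab : S -> S -> 'I_M -> bool -> bool) (rate : S -> bool -> 'I_M -> R).

Definition edgerel : rel S := fun a b => [exists l, exists s, lab a b l s].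

Lemma scale_mkGen (a : R) y z :
  a * mkGen lab rate y z = mkGen lab (fun y s l => a * rate y s l) y z.
Proof.
have scale_offdiag y' z' :
    a * offdiag lab rate y' z' = offdiag lab (fun y s l => a * rate y s l) y' z'.
  rewrite /offdiag big_distrr; apply: eq_bigr => l _.
  by rewrite big_distrr; apply: eq_bigr => s _; case: (lab _ _ _ _) => //; exact: mulr0.
rewrite /mkGen; case: eqP => _; last exact: scale_offdiag.
by rewrite mulrN big_distrr; congr (- _); apply: eq_bigr => w _; exact: scale_offdiag.
Qed.

Lemma cvg_mkGen {T : Type} (F : set_system T) {FF : Filter F}
    (rateF : T -> S -> bool -> 'I_M -> R) y z :
  (forall y s l, rateF x y s l @[x --> F] --> rate y s l) ->
  mkGen lab (rateF x) y z @[x --> F] --> mkGen lab rate y z.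
Proof.
move=> rate_cvg.
have offdiag_cvg y' z' : offdiag lab (rateF x) y' z' @[x --> F] --> offdiag lab rate y' z'.
  apply: cvgr_sum => l _; apply: cvgr_sum => s _.
  by case: ifP => _; [exact: rate_cvg | exact: cvg_cst].
rewrite /mkGen; case: eqP => _; last exact: offdiag_cvg.
by apply: cvgN; apply: cvgr_sum => w _; exact: offdiag_cvg.
Qed.

Hypothesis rate_ge0 : forall y s l, 0 <= rate y s l.

Lemma offdiag_ge0 y z : 0 <= offdiag lab rate y z.
Proof. by apply: sumr_ge0 => l _; apply: sumr_ge0 => s _; case: ifP. Qed.

Lemma mkGen_ge0 y z : y != z -> 0 <= mkGen lab rate y z.
Proof. by move=> /negbTE yz; rewrite /mkGen yz offdiag_ge0. Qed.

Lemma posrel_mkGen_edge : subrel (posrel (mkGen lab rate)) edgerel.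
Proof.
move=> y z; rewrite /posrel /mkGen; case: eqP => _.
  by rewrite oppr_gt0 ltNge sumr_ge0 // => w _; exact: offdiag_ge0.
apply: contraLR => /existsPn no_edge; rewrite -leNgt le_eqVlt; apply/orP; left.
apply/eqP/big1 => l _; apply: big1 => s _.
by move: (no_edge l) => /existsPn /(_ s) /negbTE ->.
Qed.

Hypothesis edgerel_irrefl : irreflexive edgerel.

Lemma omega_mkGen_eq0 (c : seq S) : uniq c -> cycle edgerel c ->
  ~~ cycle (posrel (mkGen lab rate)) c -> omega (mkGen lab rate) c = 0.
Proof.
move=> uc c_edge; apply: contraNeq => omega_neq0.
move: omega_neq0; rewrite /omega !mulf_eq0 !negb_or.
move=> /andP [/andP [/andP [_ rates_neq0] _] _].
apply: (cycle_from_next uc) => y yc.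
have y_neq_next : y != next c y.
  by apply: contraTneq (next_cycle c_edge yc) => <-; rewrite edgerel_irrefl.
rewrite /posrel /= lt0r mkGen_ge0 // andbT.
by move: rates_neq0; rewrite prodf_seq_neq0 => /allP /(_ y yc).
Qed.

Lemma omega_tilde_mkGenE (ct : 'I_M -> int) :
  omega_tilde (mkGen lab rate) lab ct =
  \sum_(n < #|S|.+1) \sum_(t : n.-tuple S |
      [&& is_dcycle edgerel t, canon_rot t & [forall l, phi lab t l == ct l]])
    omega (mkGen lab rate) t.
Proof.
apply: eq_bigr => n _; rewrite big_mkcond [RHS]big_mkcond; apply: eq_bigr => t _.
rewrite /is_dcycle; case: (boolP (uniq t)) => [ut|]; last by rewrite !andbF.
have [pos_cycle|not_pos_cycle] := boolP (cycle (posrel (mkGen lab rate)) t).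
  by rewrite (sub_cycle posrel_mkGen_edge pos_cycle).
have [edge_cycle|] := boolP (cycle edgerel t); last by rewrite !andbF.
by rewrite omega_mkGen_eq0 // !if_same.
Qed.

End generators.

Lemma cvg_omega_div {R : realType} {S : finType}
    (Q : R -> S -> S -> R) (Q0 : S -> S -> R) (c : seq S) :
  (forall y z, (fun V => V^-1 * Q V y z) @ +oo --> Q0 y z) ->
  \sum_(j : S) minorQ Q0 (~: [set j]) != 0 -> uniq c -> c != [::] ->
  (fun V => omega (Q V) c / V) @ +oo --> omega Q0 c.
Proof.
move=> Q_cvg D_neq0 uc cn0.
apply: (@cvg_near_eq _ _ _ _ _ (fun V => omega (fun y z => V^-1 * Q V y z) c));
  last exact: cvg_omega.
near=> V.
have V_neq0 : V != 0 by apply: lt0r_neq0; near: V; exact: nbhs_pinfty_gt.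
by rewrite omega_scale ?invr_neq0 // mulrC.
Unshelve. all: by end_near.
Qed.

Theorem mainTheorem3 (R : realType) (N1 N2 M : nat)
  (XiX : bool -> 'I_M -> 'I_N1 -> nat) (XiY : bool -> 'I_M -> 'I_N2 -> nat)
  (k : bool -> 'I_M -> R) (NA : R)
  (S : finType)
  (nV : R -> S -> 'I_N2 -> nat) (nxV : R -> 'I_N1 -> nat)
  (edge : S -> S -> 'I_M -> bool -> bool)
  (alpha : 'I_N1 -> R) (beta : S -> 'I_N2 -> R) :
  (* standing assumptions of the model *)
  (forall l i, (val l != 0%N) -> XiX true l i = 0%N) ->
  (forall l i, (val l != M.-1) -> XiX false l i = 0%N) ->
  (forall s l, exists j, sstoich XiY s l j != 0) ->
  (forall s l s' l', (s, l) != (s', l') -> exists j, sstoich XiY s l j != sstoich XiY s' l' j) ->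
  (forall s l, 0 < k s l) -> 0 < NA ->
  (* n^V injective *)
  (forall V, 0 < V -> forall y y', (forall j, nV V y j = nV V y' j) -> y = y') ->
  (* (a): the labelled edge set does not depend on V *)
  (forall V, 0 < V -> forall y y' l s, labV XiY (nV V) y y' l s = edge y y' l s) ->
  (* (b): thermodynamic limits *)
  (forall y j, 0 <= beta y j) -> (forall i, 0 <= alpha i) ->
  (forall y j, (fun V : R => (nV V y j)%:R / (V * NA)) @ +oo --> beta y j) ->
  (forall i, (fun V : R => (nxV V i)%:R / (V * NA)) @ +oo --> alpha i) ->
  (* (c): irreducibility of Q^V *)
  (forall V, 0 < V -> irreducible_gen
     (mkGen (labV XiY (nV V))
        (fun y s l => propensity k NA XiX XiY V (nxV V) (nV V y) s l))) ->
  (* nondegeneracy of the limiting generator *)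
  \sum_(j : S) minorQ
     (mkGen edge (fun y s l => arate k NA XiX XiY alpha (beta y) s l)) (~: [set j]) != 0 ->
  let QV := fun V : R => mkGen (labV XiY (nV V))
        (fun y s l => propensity k NA XiX XiY V (nxV V) (nV V y) s l) in
  let Qhat := mkGen edge (fun y s l => arate k NA XiX XiY alpha (beta y) s l) in
  (forall ct : 'I_M -> int,
     (fun V : R => omega_tilde (QV V) (labV XiY (nV V)) ct / V) @ +oo -->
       omega_tilde Qhat edge ct)
  /\
  (forall c : seq S,
     is_dcycle (fun a b => [exists l, exists s, edge a b l s]) c ->
     (fun V : R => omega (QV V) c / V) @ +oo --> omega Qhat c).
Proof.
move=> _ _ Xi_neq0 _ k_gt0 NA_gt0 _ labE beta_ge0 alpha_ge0 beta_cvg alpha_cvg _ D_neq0 QV Qhat.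
pose rateV V y s l := propensity k NA XiX XiY V (nxV V) (nV V y) s l.
have labVE V : 0 < V -> labV XiY (nV V) = edge.
  by move=> V_gt0; do 4!apply: funext => ?; exact: labE.
have edge_irrefl : irreflexive (edgerel edge).
  move=> y; apply/existsPn => l; apply/existsPn => s.
  by rewrite -(labE 1) ?ltr01 // labV_irrefl.
have Q_cvg y z : (fun V => V^-1 * QV V y z) @ +oo --> Qhat y z.
  apply: (@cvg_near_eq _ _ _ _ _
    (fun V => mkGen edge (fun y s l => V^-1 * rateV V y s l) y z)).
    by near=> V; rewrite /QV labVE ?scale_mkGen //; near: V; exact: nbhs_pinfty_gt.
  by apply: cvg_mkGen => y' s l; exact: cvg_propensity_div.
split=> [ct|c /and3P [c_size uc _]]; last first.
  by apply: cvg_omega_div => //; case: c c_size {uc}.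
rewrite /Qhat omega_tilde_mkGenE //; last by move=> *; exact: arate_ge0.
apply: cvg_near_eq; last first.
  apply: cvgr_sum => n _; apply: cvgr_sum => t /and3P [/and3P [t_size ut _] _ _].
  by apply: cvg_omega_div => //; case: (tval t) t_size {ut}.
near=> V.
have V_gt0 : 0 < V by near: V; exact: nbhs_pinfty_gt.
rewrite /QV labVE // omega_tilde_mkGenE //; last by move=> *; exact: propensity_ge0.
by rewrite big_distrl; apply: eq_bigr => n _; rewrite big_distrl.
Unshelve. all: by end_near.
Qed.
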